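(* For a reaction network $(X,\mathscr{R})$, the binary relation $\rightleftharpoons$ on $X$ is an equivalence relation.
   Context: A reaction network (RN) $(X,\mathscr{R})$ consists of a finite non-empty set $X$ of species and a finite non-empty set $\mathscr{R}$ of reactions. Each reaction $r$ is given by stoichiometric coefficients $s^-_{xr},s^+_{xr}\in\mathbb{N}_0$. The stoichiometric matrix $S\in\mathbb{Z}^{X\times\mathscr{R}}$ has entries $S_{xr}=s^+_{xr}-s^-_{xr}$. The paper assumes throughout that RNs are closed: every reaction $r$ has $x,y$ with $S_{xr}<0<S_{yr}$. Distinct $x,y\in X$ are obligatory isomers if there is $v\in\mathbb{Z}^{\mathscr{R}}$ with: - $-[Sv]_x=[Sv]_y=k$ for some positive integer $k$; - $[Sv]_z=0$ for all $z\in X\setminus\{x,y\}$. Write $x\rightleftharpoons y$ if $x=y$ or $x$ and $y$ are obligatory isomers. *)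

From HB Require Import structures.
From mathcomp Require Import all_boot all_order all_algebra.
Set Implicit Arguments. Unset Strict Implicit. Unset Printing Implicit Defensive.
Import Order.TTheory GRing.Theory Num.Theory.
Local Open Scope ring_scope.

(* A reaction network: finite species type X, finite reaction type Rx,
   stoichiometric coefficients s^-_{xr} (sminus) and s^+_{xr} (splus). *)

Definition stoich (X Rx : finType) (sminus splus : X -> Rx -> nat)
  (x : X) (r : Rx) : int := (splus x r)%:Z - (sminus x r)%:Z.

Definition Sv (X Rx : finType) (sminus splus : X -> Rx -> nat)
  (v : Rx -> int) (x : X) : int :=
  \sum_(r : Rx) stoich sminus splus x r * v r.

Definition closed_RN (X Rx : finType) (sminus splus : X -> Rx -> nat) : Prop :=
  forall r : Rx, exists x y : X,
    stoich sminus splus x r < 0 /\ 0 < stoich sminus splus y r.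

Definition obligatory_isomers (X Rx : finType) (sminus splus : X -> Rx -> nat)
  (x y : X) : Prop :=
  x <> y /\
  exists v : Rx -> int, exists k : nat, (0 < k)%N /\
    - Sv sminus splus v x = k%:Z /\ Sv sminus splus v y = k%:Z /\
    (forall z : X, z <> x -> z <> y -> Sv sminus splus v z = 0).

Definition isomer_rel (X Rx : finType) (sminus splus : X -> Rx -> nat)
  (x y : X) : Prop :=
  x = y \/ obligatory_isomers sminus splus x y.

(** Negating [v] swaps the roles of [x] and [y];
    if [S v = k (e_y - e_x)] and [S w = m (e_z - e_y)], then
    [S (m v + k w) = k m (e_z - e_x)] because the [e_y] terms cancel. *)
From mathcomp Require Import all_boot all_order all_algebra.
From mathcomp Require Import ring.
Import GRing.Theory Num.Theory.
Local Open Scope ring_scope.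

Section ObligatoryIsomers.

Variables (X Rx : finType) (sminus splus : X -> Rx -> nat).

Local Notation S := (Sv sminus splus).
Local Notation isomers := (obligatory_isomers sminus splus).

Lemma Sv_comb (a b : int) (v w : Rx -> int) (x : X) :
  S (fun r => a * v r + b * w r) x = a * S v x + b * S w x.
Proof. by rewrite /Sv !mulr_sumr -big_split /=; apply: eq_bigr => r _; ring. Qed.

Lemma Sv_opp (v : Rx -> int) (x : X) : S (fun r => - v r) x = - S v x.
Proof. by rewrite /Sv -sumrN; apply: eq_bigr => r _; rewrite mulrN. Qed.

Lemma obligatory_isomers_sym (x y : X) : isomers x y -> isomers y x.
Proof.
case=> nxy [v [k [k_gt0 [Svx [Svy Sv0]]]]].
split; first by move=> eyx; apply: nxy.
exists (fun r => - v r), k; rewrite !Sv_opp Svx Svy opprK.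
by do 3!split=> //; move=> z zy zx; rewrite Sv_opp Sv0 ?oppr0.
Qed.

Lemma obligatory_isomers_trans (x y z : X) :
  x <> z -> isomers x y -> isomers y z -> isomers x z.
Proof.
move=> nxz [nxy [v [k [k_gt0 [Svx [Svy Sv0]]]]]].
case=> nyz [w [m [m_gt0 [Swy [Swz Sw0]]]]].
have Svz : S v z = 0 by apply: Sv0 => [ezx|ezy]; [apply: nxz | apply: nyz].
have Swx : S w x = 0 by apply: Sw0 => [//|exz]; apply: nxz.
have {}Svx : S v x = - k%:Z by rewrite -Svx opprK.
have {}Swy : S w y = - m%:Z by rewrite -Swy opprK.
split=> //; exists (fun r => m%:Z * v r + k%:Z * w r), (k * m)%N.
split; first by rewrite muln_gt0 k_gt0 m_gt0.
rewrite !Sv_comb Svx Swx Svz Swz PoszM; split; first by ring.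
split; first by ring.
move=> t ntx ntz; rewrite Sv_comb.
have [->|nty] := eqVneq t y; first by rewrite Svy Swy; ring.
by rewrite Sv0 ?Sw0 //; [ring | apply/eqP | apply/eqP].
Qed.

Lemma isomer_rel_sym (x y : X) :
  isomer_rel sminus splus x y -> isomer_rel sminus splus y x.
Proof. by case=> [->|hxy]; [left | right; apply: obligatory_isomers_sym]. Qed.

Lemma isomer_rel_trans (x y z : X) :
  isomer_rel sminus splus x y -> isomer_rel sminus splus y z ->
  isomer_rel sminus splus x z.
Proof.
case=> [->|hxy] // [<-|hyz]; first by right.
have [->|nxz] := eqVneq x z; first by left.
by right; apply: obligatory_isomers_trans hxy hyz; apply/eqP.
Qed.

End ObligatoryIsomers.

Theorem proposition9 (X Rx : finType) (sminus splus : X -> Rx -> nat)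
  (hX : (0 < #|X|)%N) (hR : (0 < #|Rx|)%N)
  (hclosed : closed_RN sminus splus) :
  (forall x : X, isomer_rel sminus splus x x) /\
  (forall x y : X, isomer_rel sminus splus x y -> isomer_rel sminus splus y x) /\
  (forall x y z : X, isomer_rel sminus splus x y -> isomer_rel sminus splus y z ->
     isomer_rel sminus splus x z).
Proof.
split; first by move=> x; left.
split; [exact: isomer_rel_sym | exact: isomer_rel_trans].
Qed.
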